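(* Let $X,Y$ be Banach spaces and $N$ an absolute normalized norm on $\mathbb R^2$. (1) If $x\in S_X$ and $y\in S_Y$ are super $\Delta$-points, then $(ax,by)$ is a super $\Delta$-point of $X\oplus_NY$ for every $(a,b)\in\mathbb R^2$ with $N(a,b)=1$. (2) If $x\in S_X$ is a super $\Delta$-point then $(x,0)$ is a super $\Delta$-point of $X\oplus_NY$; if $y\in S_Y$ is a super $\Delta$-point then $(0,y)$ is a super $\Delta$-point of $X\oplus_NY$.
   Context: A norm $N$ on $\mathbb R^2$ is absolute if $N(a,b)=N(|a|,|b|)$ and normalized if $N(1,0)=N(0,1)=1$. $X\oplus_NY$ is $X\times Y$ with norm $\|(x,y)\|=N(\|x\|,\|y\|)$. An element $x\in S_X$ is a super $\Delta$-point if $\sup_{z\in V}\|x-z\|=2$ for every relatively weakly open subset $V$ of $B_X$ containing $x$. *)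

From HB Require Import structures.
From mathcomp Require Import all_boot all_order all_algebra.
From mathcomp Require Import all_classical all_reals all_analysis.
Set Implicit Arguments. Unset Strict Implicit. Unset Printing Implicit Defensive.
Import Order.TTheory GRing.Theory Num.Theory.
Import numFieldNormedType.Exports.
Local Open Scope classical_set_scope.
Local Open Scope ring_scope.

Section Defs.
Context {R : realType}.

Definition abs_norm_R2 (N : R -> R -> R) : Prop :=
  [/\ (forall a b, N a b = 0 -> a = 0 /\ b = 0),
      (forall l a b, N (l * a) (l * b) = `|l| * N a b),
      (forall a b c d, N (a + c) (b + d) <= N a b + N c d),
      (forall a b, N a b = N `|a| `|b|) &
      (N 1 0 = 1 /\ N 0 1 = 1)].

Context {V : lmodType R} (nrm : V -> R).

Definition dual_functional (f : V -> R) : Prop :=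
  (forall (l : R) (u v : V), f (l *: u + v) = l * f u + f v) /\
  (forall v (e : R), 0 < e -> exists2 d : R, 0 < d &
      forall w, nrm (w - v) < d -> `|f w - f v| < e).

Definition weakly_open (U : set V) : Prop :=
  forall z, U z -> exists (n : nat) (fs : 'I_n -> V -> R) (e : R),
    [/\ 0 < e, (forall i, dual_functional (fs i)) &
        forall w, (forall i, `|fs i w - fs i z| < e) -> U w].

Definition unit_ball : set V := [set v | nrm v <= 1].
Definition unit_sphere : set V := [set v | nrm v = 1].

Definition rel_weakly_open_ball (W : set V) : Prop :=
  exists2 U, weakly_open U & W = unit_ball `&` U.

Definition super_delta_point (x : V) : Prop :=
  unit_sphere x /\
  forall W, rel_weakly_open_ball W -> W x ->
    sup [set nrm (x - z) | z in W] = 2.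

End Defs.

Definition sumN {R : realType} {X Y : normedModType R} (N : R -> R -> R)
  (p : (X * Y)%type) : R := N `|p.1| `|p.2|.

(* Given a relatively weakly open W containing (a x, b y), restrict the finitely many
   functionals defining a basic neighbourhood of (a x, b y) to X and to Y: this gives
   weak neighbourhoods of x and of y, in which the super Delta-property yields u, v with
   |x - u| and |y - v| close to 2.  The point (a u, b v) then lies in W, and since an
   absolute norm is monotone in the moduli of its arguments,
   N(|a| |x - u|, |b| |y - v|) is close to N(2|a|, 2|b|) = 2.  For (x, 0) the same
   argument runs with a = 1, b = 0, and the missing point of Y is replaced by 0. *)
From HB Require Import structures.
From mathcomp Require Import all_boot all_order all_algebra.
From mathcomp Require Import all_classical all_reals all_analysis.
From mathcomp Require Import ring lra.
Import Order.TTheory GRing.Theory Num.Theory.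
Import numFieldNormedType.Exports.
Set Implicit Arguments.
Local Open Scope classical_set_scope.
Local Open Scope ring_scope.

Lemma sup_eq_approx (R : realType) (S : set R) (M : R) :
  S !=set0 -> ubound S M -> (forall d, 0 < d -> exists2 s, S s & M - d <= s) ->
  sup S = M.
Proof.
move=> S0 SM Sapprox; apply/eqP; rewrite eq_le ge_sup //=.
apply/ler_addgt0Pr => d d0; have [s Ss Ms] := Sapprox d d0.
have := ub_le_sup (ex_intro _ M SM) Ss; lra.
Qed.

Section WeakTopology.
Context {R : realType} {V : lmodType R} (nrm : V -> R).

Lemma dual_functional_linear (f : V -> R) : dual_functional nrm f ->
  [/\ f 0 = 0, (forall l u, f (l *: u) = l * f u) & (forall u v, f (u + v) = f u + f v)].
Proof.
move=> [f_lin _].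
have f0 : f 0 = 0 by have := f_lin 1 0 0; rewrite scale1r addr0 mul1r; lra.
split=> // [l u|u v]; first by have := f_lin l u 0; rewrite !addr0 f0 addr0.
by have := f_lin 1 u v; rewrite scale1r mul1r.
Qed.

Lemma dual_functional_comp {U : lmodType R} (nrmU : U -> R) (L : U -> V) (f : V -> R) :
  (forall l u v, L (l *: u + v) = l *: L u + L v) ->
  (forall u v, nrm (L u - L v) <= nrmU (u - v)) ->
  dual_functional nrm f -> dual_functional nrmU (f \o L).
Proof.
move=> L_lin L_lip [f_lin f_cont]; split=> [l u v|v e e0] /=.
  by rewrite L_lin f_lin.
have [d d0 hd] := f_cont (L v) e e0.
by exists d => // w wv; apply: hd; apply: le_lt_trans (L_lip w v) wv.
Qed.

(* The weak interior of the slab {u | |f_i u - f_i x0| < e for all i}; taking the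
   interior avoids computing a maximum over the n functionals. *)
Definition weak_basic_nbhd (n : nat) (fs : 'I_n -> V -> R) (x0 : V) (e : R) : set V :=
  [set u | exists2 d : R, 0 < d & forall w, (forall i, `|fs i w - fs i u| < d) ->
     forall i, `|fs i w - fs i x0| < e].

Variables (n : nat) (fs : 'I_n -> V -> R) (x0 : V) (e : R).

Lemma weakly_open_basic_nbhd : (forall i, dual_functional nrm (fs i)) ->
  weakly_open nrm (weak_basic_nbhd fs x0 e).
Proof.
move=> fs_dual z [d d0 hz]; exists n, fs, (d / 2); split=> // [|w hw].
  by rewrite divr_gt0.
exists (d / 2); first by rewrite divr_gt0.
move=> w' hw'; apply: hz => i.
have := ler_distD (fs i w) (fs i w') (fs i z); have := hw i; have := hw' i; lra.
Qed.

Lemma rel_weakly_open_basic_nbhd : (forall i, dual_functional nrm (fs i)) ->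
  rel_weakly_open_ball nrm (unit_ball nrm `&` weak_basic_nbhd fs x0 e).
Proof.
by move=> fs_dual; exists (weak_basic_nbhd fs x0 e) => //; apply: weakly_open_basic_nbhd.
Qed.

Lemma basic_nbhd_center : 0 < e -> weak_basic_nbhd fs x0 e x0.
Proof. by move=> e0; exists e. Qed.

Lemma basic_nbhd_close u : weak_basic_nbhd fs x0 e u ->
  forall i, `|fs i u - fs i x0| < e.
Proof. by move=> [d d0]; apply => i; rewrite subrr normr0. Qed.

End WeakTopology.

Section AbsoluteNorm.
Context {R : realType} (N : R -> R -> R) (HN : abs_norm_R2 N).

Lemma absN_scale l a b : N (l * a) (l * b) = `|l| * N a b.
Proof. by case: HN. Qed.

Lemma absN_triangle a b c d : N (a + c) (b + d) <= N a b + N c d.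
Proof. by case: HN. Qed.

Lemma absN_abs a b : N a b = N `|a| `|b|.
Proof. by case: HN. Qed.

Lemma absN10 : N 1 0 = 1. Proof. by case: HN => _ _ _ _ []. Qed.

Lemma absN_ge0 a b : 0 <= N a b.
Proof.
have N00 : N 0 0 = 0 by have := absN_scale 0 0 0; rewrite !mul0r normr0 mul0r.
have NN : N (- a) (- b) = N a b.
  by have := absN_scale (-1) a b; rewrite !mulN1r normrN normr1 mul1r.
by have := absN_triangle a b (- a) (- b); rewrite !subrr N00 NN; lra.
Qed.

(* N(a, b) <= N(a', b) is the triangle inequality for the convex combination
   (a, b) = t (a', b) + (1 - t) (-a', b) with t = (a' + a) / 2a'. *)
Lemma absN_monol a a' b : 0 <= a -> a <= a' -> N a b <= N a' b.
Proof.
move=> a0 aa'; have [a'0|a'_neq0] := eqVneq a' 0.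
  by have -> : a = a' by apply/eqP; rewrite eq_le aa' a'0 a0.
have a'_gt0 : 0 < a' by rewrite lt_def a'_neq0 (le_trans a0 aa').
pose t := (a' + a) / (2 * a').
have t0 : 0 <= t by apply: divr_ge0; lra.
have t1 : t <= 1 by rewrite /t ler_pdivrMr ?mul1r; lra.
have -> : N a b = N (t * a' + (1 - t) * (- a')) (t * b + (1 - t) * b).
  by congr N; rewrite /t; field; lra.
apply: le_trans (absN_triangle _ _ _ _) _.
rewrite !absN_scale (absN_abs (- a')) normrN -absN_abs (ger0_norm t0) ger0_norm; lra.
Qed.

End AbsoluteNorm.

Lemma abs_norm_R2_swap (R : realType) (N : R -> R -> R) :
  abs_norm_R2 N -> abs_norm_R2 (fun a b => N b a).
Proof.
by case=> N0 Nscale Ntri Nabs [N10 N01]; split=> // a b /N0 [].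
Qed.

Section AbsoluteNormMonotone.
Context {R : realType} (N : R -> R -> R) (HN : abs_norm_R2 N).

Lemma absN01 : N 0 1 = 1. Proof. exact: absN10 (abs_norm_R2_swap HN). Qed.

Lemma absN_mono a a' b b' : `|a| <= `|a'| -> `|b| <= `|b'| -> N a b <= N a' b'.
Proof.
move=> aa' bb'; rewrite (absN_abs HN a) (absN_abs HN a').
apply: le_trans (absN_monol HN _ _ _ (normr_ge0 a) aa') _.
exact: (absN_monol (abs_norm_R2_swap HN)) (normr_ge0 _) bb'.
Qed.

End AbsoluteNormMonotone.

Section DirectSum.
Context {R : realType} {X Y : normedModType R} (N : R -> R -> R) (HN : abs_norm_R2 N).

Local Notation nrm := (sumN (X:=X) (Y:=Y) N).

Lemma sumN_ge0 (p : X * Y) : 0 <= nrm p.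
Proof. exact: absN_ge0. Qed.

Lemma sumN_triangle (p q : X * Y) : nrm (p + q) <= nrm p + nrm q.
Proof.
apply: le_trans (absN_triangle HN _ _ _ _).
by apply: absN_mono => //; rewrite normr_id ger0_norm ?addr_ge0 //; apply: ler_normD.
Qed.

Lemma sumN_opp (p : X * Y) : nrm (- p) = nrm p.
Proof. by rewrite /sumN /= !normrN. Qed.

Lemma sumN_scale a b (u : X) (v : Y) :
  nrm (a *: u, b *: v) = N (`|a| * `|u|) (`|b| * `|v|).
Proof. by rewrite /sumN /= !normrZ. Qed.

Lemma sumN_inl (u : X) : nrm (u, 0) = `|u|.
Proof.
rewrite /sumN /= normr0.
by have := absN_scale HN `|u| 1 0; rewrite mulr1 mulr0 normr_id absN10 // mulr1.
Qed.

Lemma sumN_inr (v : Y) : nrm (0, v) = `|v|.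
Proof.
rewrite /sumN /= normr0.
by have := absN_scale HN `|v| 0 1; rewrite mulr1 mulr0 normr_id absN01 // mulr1.
Qed.

Lemma dual_functional_inl (f : X * Y -> R) : dual_functional nrm f ->
  dual_functional (fun u : X => `|u|) (fun u => f (u, 0)).
Proof.
apply: (dual_functional_comp _ (fun u : X => (u, 0 : Y))) => [l u v|u v].
  by apply/eqP; rewrite xpair_eqE /= scaler0 addr0 !eqxx.
have -> : ((u, 0) - (v, 0) : X * Y) = (u - v, 0).
  by apply/eqP; rewrite xpair_eqE /= subr0 !eqxx.
by rewrite sumN_inl.
Qed.

Lemma dual_functional_inr (f : X * Y -> R) : dual_functional nrm f ->
  dual_functional (fun v : Y => `|v|) (fun v => f (0, v)).
Proof.
apply: (dual_functional_comp _ (fun v : Y => (0 : X, v))) => [l u v|u v].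
  by apply/eqP; rewrite xpair_eqE /= scaler0 addr0 !eqxx.
have -> : ((0, u) - (0, v) : X * Y) = (0, u - v).
  by apply/eqP; rewrite xpair_eqE /= subr0 !eqxx.
by rewrite sumN_inr.
Qed.

End DirectSum.

Section DeltaPoints.
Context {R : realType} {Z : normedModType R}.

(* With weight c = 0 every point qualifies; this is what handles the zero
   coordinate of (x, 0) and (0, y). *)
Definition weighted_delta (c : R) (z : Z) : Prop :=
  forall W, rel_weakly_open_ball (fun v : Z => `|v|) W -> W z ->
  forall d, 0 < d -> exists2 u, W u & c * (2 - d) <= c * `|z - u|.

Lemma super_delta_point_far (z : Z) : super_delta_point (fun v : Z => `|v|) z ->
  forall W, rel_weakly_open_ball (fun v : Z => `|v|) W -> W z ->
  forall d, 0 < d -> exists2 u, W u & 2 - d < `|z - u|.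
Proof.
move=> [z1 z_sup] W W_open Wz d d0.
have sup2 := z_sup W W_open Wz.
have W_ball : W `<=` unit_ball (fun v : Z => `|v|).
  by case: W_open => U _ ->; apply: subIsetl.
have has_sup_dist : has_sup [set `|z - w| | w in W].
  split; first by exists `|z - z|, z.
  exists 2 => _ [w Ww <-]; apply: le_trans (ler_normB _ _) _.
  by have := W_ball w Ww; rewrite /unit_ball /= z1; lra.
have [_ [w Ww <-]] := sup_adherent d0 has_sup_dist.
by rewrite sup2; exists w.
Qed.

Lemma super_delta_point_weighted c (z : Z) : 0 <= c ->
  super_delta_point (fun v : Z => `|v|) z -> weighted_delta c z.
Proof.
move=> c0 z_delta W W_open Wz d d0.
have [u Wu zu] := super_delta_point_far z_delta W_open Wz _ d0.
by exists u => //; rewrite ler_wpM2l // ltW.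
Qed.

Lemma weighted_delta0 (z : Z) : weighted_delta 0 z.
Proof. by move=> W _ Wz d _; exists z; rewrite ?mul0r. Qed.

End DeltaPoints.

Section ScaledPairs.
Context {R : realType} {X Y : normedModType R} (N : R -> R -> R) (HN : abs_norm_R2 N).

Local Notation nrm := (sumN (X:=X) (Y:=Y) N).

Variables (a b : R) (Nab : N a b = 1).

Lemma sumN_scaled_ball (u : X) (v : Y) : `|u| <= 1 -> `|v| <= 1 ->
  nrm (a *: u, b *: v) <= 1.
Proof.
move=> u1 v1; rewrite sumN_scale -Nab.
by apply: (absN_mono HN); rewrite normrM !normr_id; apply: ler_piMr.
Qed.

Lemma dual_functional_scaled_pair (f : X * Y -> R) (x u : X) (y v : Y) :
  dual_functional nrm f ->
  `|f (a *: u, b *: v) - f (a *: x, b *: y)| <=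
    `|a| * `|f (u, 0) - f (x, 0)| + `|b| * `|f (0, v) - f (0, y)|.
Proof.
move=> /dual_functional_linear [_ fZ fD].
have pairZ (x' : X) (y' : Y) : (a *: x', b *: y') = a *: (x', 0) + b *: (0, y').
  by apply/eqP; rewrite xpair_eqE /= !scaler0 addr0 add0r !eqxx.
rewrite !pairZ !fD !fZ -!normrM.
have -> (p q r s : R) :
    a * p + b * q - (a * r + b * s) = a * (p - r) + b * (q - s) by ring.
exact: ler_normD.
Qed.

Lemma sumN_scaled_far (x u : X) (y v : Y) d :
  `|a| * (2 - d) <= `|a| * `|x - u| -> `|b| * (2 - d) <= `|b| * `|y - v| ->
  2 - d <= nrm ((a *: x, b *: y) - (a *: u, b *: v)).
Proof.
move=> xu yv; have [d2|d2] := leP 0 (2 - d); last first.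
  exact: le_trans (ltW d2) (sumN_ge0 _ _).
have -> : 2 - d = N ((2 - d) * `|a|) ((2 - d) * `|b|).
  by rewrite absN_scale // -absN_abs // Nab ger0_norm ?mulr1.
rewrite /sumN /= -!scalerBr !normrZ.
by apply: (absN_mono HN); rewrite !normrM !normr_id (ger0_norm d2) mulrC.
Qed.

Lemma sumN_scaled_super_delta (x : X) (y : Y) :
  nrm (a *: x, b *: y) = 1 -> `|x| <= 1 -> `|y| <= 1 ->
  weighted_delta `|a| x -> weighted_delta `|b| y ->
  super_delta_point nrm (a *: x, b *: y).
Proof.
move=> p1 x1 y1 x_delta y_delta; split=> // W [U U_open ->] [_ Up].
apply: sup_eq_approx.
- exists (nrm ((a *: x, b *: y) - (a *: x, b *: y))), (a *: x, b *: y) => //.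
  by split; rewrite // /unit_ball /= p1.
- move=> _ [z [z1 _] <-]; apply: le_trans (sumN_triangle HN _ _) _.
  by rewrite sumN_opp p1; move: z1; rewrite /unit_ball /=; lra.
move=> d d0; have [n [fs [e [e0 fs_dual U_slab]]]] := U_open _ Up.
pose e' := e / (`|a| + `|b| + 1).
have e'0 : 0 < e' by rewrite divr_gt0 // ltr_wpDl ?addr_ge0.
have [u [u1 u_near] xu] := x_delta _
  (rel_weakly_open_basic_nbhd (fun i (w : X) => fs i (w, 0)) x e'
     (fun i => dual_functional_inl HN (fs_dual i)))
  (conj x1 (basic_nbhd_center _ _ _ e'0)) _ d0.
have [v [v1 v_near] yv] := y_delta _
  (rel_weakly_open_basic_nbhd (fun i (w : Y) => fs i (0, w)) y e'
     (fun i => dual_functional_inr HN (fs_dual i)))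
  (conj y1 (basic_nbhd_center _ _ _ e'0)) _ d0.
exists (nrm ((a *: x, b *: y) - (a *: u, b *: v))); last exact: sumN_scaled_far.
exists (a *: u, b *: v) => //; split; first exact: sumN_scaled_ball.
apply: U_slab => i; apply: le_lt_trans (dual_functional_scaled_pair _ _ _ _ (fs_dual i)) _.
have e_split : `|a| * e' + `|b| * e' + e' = e.
  by rewrite /e'; field; rewrite gt_eqF // ltr_wpDl ?addr_ge0.
have := basic_nbhd_close u_near i; have := basic_nbhd_close v_near i.
have := normr_ge0 a; have := normr_ge0 b; nra.
Qed.

End ScaledPairs.

Theorem mainTheorem6 (R : realType) (X Y : completeNormedModType R)
  (N : R -> R -> R) (HN : abs_norm_R2 N) :
  (forall (x : X) (y : Y),
     super_delta_point (fun v : X => `|v|) x ->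
     super_delta_point (fun v : Y => `|v|) y ->
     forall a b : R, N a b = 1 ->
       super_delta_point (sumN (X:=X) (Y:=Y) N) (a *: x, b *: y)) /\
  (forall x : X, super_delta_point (fun v : X => `|v|) x ->
       super_delta_point (sumN (X:=X) (Y:=Y) N) (x, 0)) /\
  (forall y : Y, super_delta_point (fun v : Y => `|v|) y ->
       super_delta_point (sumN (X:=X) (Y:=Y) N) (0, y)).
Proof.
split; [|split].
- move=> x y x_delta y_delta a b Nab.
  have [x1 y1] : `|x| = 1 /\ `|y| = 1 by split; [case: x_delta|case: y_delta].
  apply: sumN_scaled_super_delta; rewrite ?x1 ?y1 //.
  + by rewrite sumN_scale x1 y1 !mulr1 -absN_abs.
  + exact: super_delta_point_weighted.
  + exact: super_delta_point_weighted.
- move=> x x_delta; have x1 : `|x| = 1 by case: x_delta.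
  rewrite -[x]scale1r -(scale0r (0 : Y)).
  apply: sumN_scaled_super_delta; rewrite ?x1 ?normr0 ?normr1 ?ler01 //.
  + exact: absN10.
  + by rewrite scale0r scale1r sumN_inl.
  + exact: super_delta_point_weighted.
  + exact: weighted_delta0.
- move=> y y_delta; have y1 : `|y| = 1 by case: y_delta.
  rewrite -[y]scale1r -(scale0r (0 : X)).
  apply: sumN_scaled_super_delta; rewrite ?y1 ?normr0 ?normr1 ?ler01 //.
  + exact: absN01.
  + by rewrite scale0r scale1r sumN_inr.
  + exact: weighted_delta0.
  + exact: super_delta_point_weighted.
Qed.
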